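(* For the encryption channel $\mathcal E$ described in the context, every (possibly computationally unbounded) quantum adversary $\mathcal A$ in the qIND–qCPA experiment has advantage exactly $0$: \[ \big|\Pr[b'=1\mid b=1]-\Pr[b'=1\mid b=0]\big|=0 . \]
   Context: Fix integers $d_1\ge d_2\ge1$ and $\eta\in\mathbb Z^+$. Let $\mathcal H_M=(\mathbb C^2)^{\otimes d_1}$, $\mathcal H_{M_c}=(\mathbb C^2)^{\otimes d_2}$, $U_k=\bigotimes_jX^{k_{2j-1}}Z^{k_{2j}}$ (Pauli $X,Z$) and $V:\mathcal H_{M_c}\to\mathcal H_M$, $V|\psi\rangle=|\psi\rangle\otimes|0\rangle^{\otimes(d_1-d_2)}$. For a state $\rho$ on message registers $M_oM_c$ (spaces $\mathcal H_M\otimes\mathcal H_{M_c}$) with marginals $\rho_{M_o},\rho_{M_c}$ and keys $k\in\{0,1\}^{2d_1}$, $k'\in\{0,1\}^{2d_2}$, let $A=\frac12U_k\rho_{M_o}U_k^\dagger$, $B=\frac1\eta VU_{k'}\rho_{M_c}U_{k'}^\dagger V^\dagger$ and $M_a(\rho;k,k')=|0\rangle\langle0|\otimes A+|0\rangle\langle1|\otimes B+|1\rangle\langle0|\otimes B^\dagger+|1\rangle\langle1|\otimes A$ on the ciphertext register $RM=\mathbb C^2\otimes\mathcal H_M$. The encryption channel is $\mathcal E(\rho)=\mathbb E_{k,k',\sigma}\big[U_\sigma M_a(\rho;k,k')U_\sigma^\dagger\big]$, with $k,k'$ uniform and $\sigma$ uniform in $\mathrm{Sym}(2^{d_1+1})$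 ($U_\sigma$ its permutation matrix), sampled freshly at every use; on inputs entangled with an adversary memory $E$ it acts as $\mathrm{id}_E\otimes\mathcal E$ and consumes the message registers. qIND–qCPA experiment: the adversary starts with an arbitrary state on a finite-dimensional memory $E$ and may adaptively query $\mathcal E$ on inputs of its choice (possibly entangled with $E$); it then outputs two pairs $(M_o^{(0)},M_c^{(0)})$, $(M_o^{(1)},M_c^{(1)})$ of density operators of matching dimensions; the challenger picks a uniform bit $b$ and returns $\mathcal E(M_o^{(b)}\otimes M_c^{(b)})$; the adversary may make further queries and finally outputs a bit $b'$. *)

From HB Require Import structures.
From mathcomp Require Import all_boot all_order all_algebra all_fingroup.
From mathcomp Require Import mxtens.
Set Implicit Arguments. Unset Strict Implicit. Unset Printing Implicit Defensive.
Import Order.TTheory GRing.Theory Num.Theory.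
Local Open Scope ring_scope.

Section Quantum.
Variable C : numClosedFieldType.

Definition adj m n (A : 'M[C]_(m, n)) : 'M[C]_(n, m) := (map_mx Num.conj A)^T.

Definition psd n (A : 'M[C]_n) : Prop :=
  forall v : 'cV[C]_n, 0 <= ((adj v) *m A *m v) 0 0.
Definition density n (rho : 'M[C]_n) : Prop := psd rho /\ \tr rho = 1.

Definition kapply m n (ks : seq 'M[C]_(m, n)) (rho : 'M[C]_n) : 'M[C]_m :=
  \sum_(K <- ks) K *m rho *m adj K.
Definition trace_pres m n (ks : seq 'M[C]_(m, n)) : Prop :=
  \sum_(K <- ks) adj K *m K = 1%:M.

Definition ket n (j : 'I_n) : 'cV[C]_n := delta_mx j 0.

Definition ptrace2 m n (rho : 'M[C]_(m * n)) : 'M[C]_m :=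
  castmx (muln1 m, muln1 m)
   (\sum_(j < n) ((1%:M : 'M[C]_m) *t (ket j)^T) *m rho *m ((1%:M : 'M[C]_m) *t ket j)).
Definition ptrace1 m n (rho : 'M[C]_(m * n)) : 'M[C]_n :=
  castmx (mul1n n, mul1n n)
   (\sum_(i < m) ((ket i)^T *t (1%:M : 'M[C]_n)) *m rho *m (ket i *t (1%:M : 'M[C]_n))).

(* single-qubit Paulis and U_k = (x)_j X^{k_{2j-1}} Z^{k_{2j}} (first qubit leftmost) *)
Definition pauliX : 'M[C]_2 := \matrix_(i, j) (i != j)%:R.
Definition pauliZ : 'M[C]_2 := \matrix_(i, j) ((i == j)%:R * (if i == 0 then 1 else -1)).
Definition pauli1 (a b : bool) : 'M[C]_2 :=
  (if a then pauliX else 1%:M) *m (if b then pauliZ else 1%:M).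

Fixpoint pauliU (d : nat) : (nat -> bool) -> 'M[C]_(2 ^ d) :=
  match d return (nat -> bool) -> 'M[C]_(2 ^ d) with
  | 0 => fun _ => 1%:M
  | d'.+1 => fun k => castmx (esym (expnS 2 d'), esym (expnS 2 d'))
                       (pauli1 (k 0%N) (k 1%N) *t pauliU d' (fun i => k i.+2))
  end.

(* U_k for a key k in {0,1}^{2d}; k_{2j-1}, k_{2j} (1-based) are nth (2j-2), nth (2j-1) *)
Definition Ukey d (k : (2 * d).-tuple bool) : 'M[C]_(2 ^ d) := pauliU d (nth false k).

Fixpoint ket0s (n : nat) : 'cV[C]_(2 ^ n) :=
  match n return 'cV[C]_(2 ^ n) with
  | 0 => 1%:M
  | n'.+1 => castmx (esym (expnS 2 n'), muln1 1) (ket (0 : 'I_2) *t ket0s n')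
  end.

Lemma dimV d1 d2 : (d2 <= d1)%N -> (2 ^ d2 * 2 ^ (d1 - d2) = 2 ^ d1)%N.
Proof. by move=> h; rewrite -expnD subnKC. Qed.

Definition Vmx d1 d2 (h : (d2 <= d1)%N) : 'M[C]_(2 ^ d1, 2 ^ d2) :=
  castmx (dimV h, muln1 _) ((1%:M : 'M[C]_(2 ^ d2)) *t ket0s (d1 - d2)).

Definition E2 (a b : 'I_2) : 'M[C]_2 := delta_mx a b.

Definition Ma d1 d2 (h : (d2 <= d1)%N) (eta : nat) (rho : 'M[C]_(2 ^ d1 * 2 ^ d2))
   (k : (2 * d1).-tuple bool) (k' : (2 * d2).-tuple bool) : 'M[C]_(2 ^ d1.+1) :=
  let A := 2^-1 *: (Ukey k *m ptrace2 rho *m adj (Ukey k)) in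
  let B := eta%:R^-1 *: (Vmx h *m Ukey k' *m ptrace1 rho *m adj (Ukey k') *m adj (Vmx h)) in
  castmx (esym (expnS 2 d1), esym (expnS 2 d1))
   (E2 0 0 *t A + E2 0 1 *t B + E2 1 0 *t adj B + E2 1 1 *t A).

(* E(rho) = E_{k,k',sigma} [U_sigma M_a U_sigma^dagger], for (Hermitian) rho *)
Definition Enc d1 d2 (h : (d2 <= d1)%N) (eta : nat) (rho : 'M[C]_(2 ^ d1 * 2 ^ d2))
   : 'M[C]_(2 ^ d1.+1) :=
  (#|{:(2 * d1).-tuple bool}|%:R * #|{:(2 * d2).-tuple bool}|%:R
     * #|{:'S_(2 ^ d1.+1)}|%:R)^-1 *:
  \sum_(k : (2 * d1).-tuple bool) \sum_(k' : (2 * d2).-tuple bool)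
   \sum_(s : 'S_(2 ^ d1.+1))
     (perm_mx s *m Ma h eta rho k k' *m adj (perm_mx s)).

(* the unique C-linear extension of E from Hermitian operators to all operators *)
Definition Enc_lin d1 d2 (h : (d2 <= d1)%N) (eta : nat) (X : 'M[C]_(2 ^ d1 * 2 ^ d2))
   : 'M[C]_(2 ^ d1.+1) :=
  Enc h eta (2^-1 *: (X + adj X)) + 'i *: Enc h eta ((2 * 'i)^-1 *: (X - adj X)).

Definition block e n (rho : 'M[C]_(e * n)) (a b : 'I_e) : 'M[C]_n :=
  castmx (mul1n n, mul1n n) (((ket a)^T *t (1%:M : 'M[C]_n)) *m rho *m (ket b *t (1%:M : 'M[C]_n))).

Definition idEnc d1 d2 (h : (d2 <= d1)%N) (eta : nat) e
   (rho : 'M[C]_(e * (2 ^ d1 * 2 ^ d2))) : 'M[C]_(e * 2 ^ d1.+1) :=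
  \sum_(a < e) \sum_(b < e) ((delta_mx a b : 'M[C]_e) *t Enc_lin h eta (block rho a b)).


(* Adversary with a finite-dimensional workspace of dimension adv_D (WLOG fixed:
   any finite family of dimensions can be padded to a common one).
   A query round: a channel memory -> memory (x) (M_o M_c), the oracle id (x) E,
   then a channel memory (x) ciphertext -> memory.
   Challenge: a quantum instrument on the memory with outcome j in adv_J,
   on outcome j the two pairs of density operators (Mo0 j, Mc0 j), (Mo1 j, Mc1 j)
   are output; the challenge ciphertext E(Mo^(b) (x) Mc^(b)) is handed to the
   adversary, who processes it with a channel, makes further queries and finally
   measures a two-outcome POVM {F, 1 - F}, F corresponding to b' = 1. *)
Record adversary (d1 d2 : nat) := Adversary {
  adv_D : nat;
  adv_init : 'M[C]_adv_D;
  adv_pre : seq (seq 'M[C]_(adv_D * (2 ^ d1 * 2 ^ d2), adv_D)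
                 * seq 'M[C]_(adv_D, adv_D * 2 ^ d1.+1));
  adv_J : finType;
  adv_inst : adv_J -> seq 'M[C]_adv_D;
  adv_Mo0 : adv_J -> 'M[C]_(2 ^ d1);
  adv_Mc0 : adv_J -> 'M[C]_(2 ^ d2);
  adv_Mo1 : adv_J -> 'M[C]_(2 ^ d1);
  adv_Mc1 : adv_J -> 'M[C]_(2 ^ d2);
  adv_chal : seq 'M[C]_(adv_D, adv_D * 2 ^ d1.+1);
  adv_post : seq (seq 'M[C]_(adv_D * (2 ^ d1 * 2 ^ d2), adv_D)
                  * seq 'M[C]_(adv_D, adv_D * 2 ^ d1.+1));
  adv_F : 'M[C]_adv_D }.
Arguments adv_inst {d1 d2} a _.
Arguments adv_Mo0 {d1 d2} a _.
Arguments adv_Mc0 {d1 d2} a _.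
Arguments adv_Mo1 {d1 d2} a _.
Arguments adv_Mc1 {d1 d2} a _.

Definition valid_adversary d1 d2 (A : adversary d1 d2) : Prop :=
  [/\ density (adv_init A),
      (forall r, r \in adv_pre A -> trace_pres r.1 /\ trace_pres r.2)
      /\ (forall r, r \in adv_post A -> trace_pres r.1 /\ trace_pres r.2),
      \sum_(j : adv_J A) \sum_(K <- adv_inst A j) adj K *m K = 1%:M,
      (forall j, [/\ density (adv_Mo0 A j), density (adv_Mc0 A j),
                    density (adv_Mo1 A j) & density (adv_Mc1 A j)])
    & trace_pres (adv_chal A) /\ psd (adv_F A) /\ psd (1%:M - adv_F A)].

Definition run_rounds d1 d2 (h : (d2 <= d1)%N) (eta : nat) (D : nat)
   (rs : seq (seq 'M[C]_(D * (2 ^ d1 * 2 ^ d2), D) * seq 'M[C]_(D, D * 2 ^ d1.+1)))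
   (rho : 'M[C]_D) : 'M[C]_D :=
  foldl (fun r rd => kapply rd.2 (idEnc h eta (kapply rd.1 r))) rho rs.

Definition qcpa_prob d1 d2 (h : (d2 <= d1)%N) (eta : nat) (A : adversary d1 d2)
   (b : bool) : C :=
  let rho1 := run_rounds h eta (adv_pre A) (adv_init A) in
  let rho2 := \sum_(j : adv_J A)
      (kapply (adv_inst A j) rho1 *t
       Enc h eta ((if b then adv_Mo1 A j else adv_Mo0 A j)
                  *t (if b then adv_Mc1 A j else adv_Mc0 A j))) in
  let rho3 := run_rounds h eta (adv_post A) (kapply (adv_chal A) rho2) in
  \tr (adv_F A *m rho3).

End Quantum.

(* Averaging U_k P U_k^† over all Pauli keys k sends P to (2^d tr P) I: the Pauli
   twirl depolarises completely.  For one qubit this is a 2x2 computation; it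
   tensorises because a linear map is determined by its values on matrix units.
   Averaged over k and k', M_a(rho; k, k') therefore depends on rho only through
   the traces of its two marginals, i.e. through tr rho, and so does E(rho).  Both
   challenge plaintexts have trace 1, so the challenge ciphertext, and with it the
   whole experiment, does not depend on b. *)

From mathcomp Require Import all_boot all_algebra all_fingroup.
From mathcomp Require Import mxtens ring.
Set Implicit Arguments. Unset Strict Implicit. Unset Printing Implicit Defensive.
Import GRing.Theory Num.Theory.
Local Open Scope ring_scope.

Section Encryption.
Variable C : numClosedFieldType.

Lemma adj_tens m n p q (A : 'M[C]_(m, n)) (B : 'M[C]_(p, q)) :
  adj (A *t B) = adj A *t adj B.
Proof. by rewrite /adj map_mxT trmx_tens. Qed.

Lemma adj_scalar_mx n (c : C) : adj (c%:M : 'M[C]_n) = c^*%:M.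
Proof. by apply/matrixP => i j; rewrite /adj !mxE rmorphMn eq_sym. Qed.

Lemma castmx_sum m n m' n' (e : (m = m') * (n = n')) (I : finType)
    (F : I -> 'M[C]_(m, n)) :
  castmx e (\sum_i F i) = \sum_i castmx e (F i).
Proof.
case: e => em en; case: m' / em; case: n' / en.
by rewrite castmx_id; apply: eq_bigr => i _; rewrite castmx_id.
Qed.

Lemma mxtrace_castmx m m' (e : m = m') (A : 'M[C]_m) : \tr (castmx (e, e) A) = \tr A.
Proof. by case: m' / e; rewrite castmx_id. Qed.

Lemma tensmx_suml m n p q (I : finType) (F : I -> 'M[C]_(m, n)) (B : 'M[C]_(p, q)) :
  (\sum_i F i) *t B = \sum_i (F i *t B).
Proof.
by apply/matrixP => i j; rewrite !mxE !summxE mulr_suml; apply: eq_bigr => k _; rewrite !mxE.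
Qed.

Lemma tensmx_sumr m n p q (I : finType) (A : 'M[C]_(m, n)) (F : I -> 'M[C]_(p, q)) :
  A *t (\sum_i F i) = \sum_i (A *t F i).
Proof.
by apply/matrixP => i j; rewrite !mxE !summxE mulr_sumr; apply: eq_bigr => k _; rewrite !mxE.
Qed.

Lemma tensmx_scalar m n (a b : C) : (a%:M : 'M[C]_m) *t (b%:M : 'M[C]_n) = (a * b)%:M.
Proof.
apply/matrixP => i j.
case: (mxtens_indexP i) => i1 i2; case: (mxtens_indexP j) => j1 j2.
rewrite tensmxE !mxE (can_eq (@mxtens_indexK _ _)) xpair_eqE.
by case: (i1 == j1); case: (i2 == j2); rewrite /= ?mulr1n ?mulr0n ?mulr0 ?mul0r.
Qed.

Lemma tensmx_delta m n (p1 q1 : 'I_m) (p2 q2 : 'I_n) :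
  (delta_mx p1 q1 : 'M[C]_m) *t (delta_mx p2 q2 : 'M[C]_n) =
  delta_mx (mxtens_index (p1, p2)) (mxtens_index (q1, q2)).
Proof.
apply/matrixP => i j.
case: (mxtens_indexP i) => i1 i2; case: (mxtens_indexP j) => j1 j2.
rewrite tensmxE !mxE !(can_eq (@mxtens_indexK _ _)) !xpair_eqE.
by rewrite -natrM mulnb andbACA.
Qed.

Lemma mxtrace_tens m n (A : 'M[C]_m) (B : 'M[C]_n) : \tr (A *t B) = \tr A * \tr B.
Proof. by rewrite /mxtrace mulr_sum; apply: eq_bigr => k _; rewrite !mxE. Qed.

Lemma mxtrace_delta n (p q : 'I_n) : \tr (delta_mx p q : 'M[C]_n) = (p == q)%:R.
Proof.
rewrite /mxtrace (bigD1 p) //= big1 ?addr0; first by rewrite mxE eqxx /= eq_sym.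
by move=> i /negbTE ne; rewrite mxE ne.
Qed.

Definition twirl (I : finType) n (X : I -> 'M[C]_n) (A : 'M[C]_n) : 'M[C]_n :=
  \sum_i X i *m A *m adj (X i).

Definition depolarizing (I : finType) n (X : I -> 'M[C]_n) (c : C) : Prop :=
  forall A, twirl X A = (c * \tr A)%:M.

Lemma twirl_sum (I J : finType) n (X : I -> 'M[C]_n) (F : J -> 'M[C]_n) :
  \sum_j twirl X (F j) = twirl X (\sum_j F j).
Proof.
rewrite exchange_big; apply: eq_bigr => i _.
by rewrite mulmx_sumr mulmx_suml.
Qed.

Lemma twirlZ (I : finType) n (X : I -> 'M[C]_n) a A : twirl X (a *: A) = a *: twirl X A.
Proof. by rewrite scaler_sumr; apply: eq_bigr => i _; rewrite -scalemxAr -scalemxAl. Qed.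

Lemma twirl_tens (I J : finType) m n (X : I -> 'M[C]_m) (Y : J -> 'M[C]_n) A B :
  twirl (fun ij : I * J => X ij.1 *t Y ij.2) (A *t B) = twirl X A *t twirl Y B.
Proof.
rewrite /twirl tensmx_suml.
rewrite -(pair_bigA _ (fun i j => (X i *t Y j) *m (A *t B) *m adj (X i *t Y j))) /=.
apply: eq_bigr => i _.
by rewrite tensmx_sumr; apply: eq_bigr => j _; rewrite adj_tens !tensmx_mul.
Qed.

Lemma depolarizing_delta (I : finType) n (X : I -> 'M[C]_n) c :
  (forall p q : 'I_n, twirl X (delta_mx p q) = (c * (p == q)%:R)%:M) ->
  depolarizing X c.
Proof.
move=> Xdelta A; rewrite {1}[A]matrix_sum_delta -twirl_sum.
under eq_bigr do rewrite -twirl_sum.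
under eq_bigr do under eq_bigr do rewrite twirlZ Xdelta scale_scalar_mx.
under eq_bigr do rewrite -(raddf_sum (@scalar_mx C n)).
rewrite -(raddf_sum (@scalar_mx C n)) /mxtrace mulr_sumr; congr (_%:M).
apply: eq_bigr => p _.
rewrite (bigD1 p) //= big1 => [|q /negbTE]; last by rewrite eq_sym => ->; rewrite !mulr0.
by rewrite eqxx mulr1 addr0 mulrC.
Qed.

Lemma depolarizing_tens (I J : finType) m n (X : I -> 'M[C]_m) (Y : J -> 'M[C]_n) c1 c2 :
  depolarizing X c1 -> depolarizing Y c2 ->
  depolarizing (fun ij : I * J => X ij.1 *t Y ij.2) (c1 * c2).
Proof.
move=> dX dY; apply: depolarizing_delta => p q.
case: (mxtens_indexP p) => p1 p2; case: (mxtens_indexP q) => q1 q2.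
rewrite -tensmx_delta twirl_tens dX dY tensmx_scalar !mxtrace_delta.
by rewrite (can_eq (@mxtens_indexK _ _)) xpair_eqE -mulnb natrM mulrACA.
Qed.

Lemma depolarizing_castmx (I : finType) n n' (e : n = n') (X : I -> 'M[C]_n) c :
  depolarizing X c -> depolarizing (fun i => castmx (e, e) (X i)) c.
Proof.
by case: n' / e => dX A; rewrite /twirl; under eq_bigr do rewrite castmx_id; exact: dX.
Qed.

Lemma depolarizing_pauli1 : depolarizing (fun ab : bool * bool => pauli1 C ab.1 ab.2) 2.
Proof.
move=> A; rewrite /twirl -(pair_bigA _ (fun a b => pauli1 C a b *m A *m adj (pauli1 C a b))).
rewrite /= !big_bool /=; apply/matrixP => i j.
rewrite /adj /pauli1 /pauliX /pauliZ /mxtrace !mul1mx !mulmx1 !map_mx1 !trmx1 !mulmx1.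
rewrite !(mxE, big_ord_recr, big_ord0) /=.
have w0 : widen_ord (leqnSn 1) ord_max = (0 : 'I_2) by apply: val_inj.
have o0 (lt02 : (0 < 2)%N) : Ordinal lt02 = 0 :> 'I_2 by apply: val_inj.
have o1 (lt12 : (1 < 2)%N) : Ordinal lt12 = ord_max :> 'I_2 by apply: val_inj.
case: i => [[|[|//]] ?]; case: j => [[|[|//]] ?];
  rewrite /= ?(rmorph0, rmorph1, rmorphN1, mulr0, mul0r, mulr1, mul1r, add0r, addr0)
    ?(mulr1n, mulr0n) ?w0 ?o0 ?o1; ring.
Qed.

Lemma sum_tuple_cons (T : finType) n m p (G : n.+1.-tuple T -> 'M[C]_(m, p)) :
  \sum_t G t = \sum_a \sum_(t : n.-tuple T) G [tuple of a :: t].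
Proof.
rewrite pair_bigA /=.
rewrite (reindex (fun at' : T * n.-tuple T => [tuple of at'.1 :: at'.2])) //=.
exists (fun t => (thead t, [tuple of behead t])) => [[a t] _ | t _] /=.
  by rewrite theadE; congr pair; apply: val_inj.
by rewrite -tuple_eta.
Qed.

Lemma sum_tuple_cast n n' (e : n = n') m p (F : (nat -> bool) -> 'M[C]_(m, p)) :
  \sum_(k : n.-tuple bool) F (nth false k) = \sum_(k : n'.-tuple bool) F (nth false k).
Proof. by case: n' / e. Qed.

Lemma depolarizing_pauliU d :
  depolarizing (fun k : (2 * d).-tuple bool => pauliU C d (nth false k)) (2 ^ d)%:R.
Proof.
elim: d => [|d IH] P.
  rewrite /twirl (eq_bigr (fun _ => P)) => [|k _]; last first.
    by rewrite /= adj_scalar_mx conjC1 mul1mx mulmx1.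
  by rewrite sumr_const card_tuple mul1r [LHS]mx11_scalar /mxtrace big_ord1.
set e := esym (expnS 2 d).
have -> : (2 ^ d.+1)%:R = 2 * (2 ^ d)%:R :> C by rewrite expnS natrM.
rewrite -(depolarizing_castmx e (depolarizing_tens depolarizing_pauli1 IH) P).
(* [2 * d.+1] and [(2 * d).+2] are not convertible, so the key space is transported. *)
have e2 : (2 * d.+1 = (2 * d).+2)%N by rewrite mulnS.
rewrite /twirl (sum_tuple_cast e2 (fun f => pauliU C d.+1 f *m P *m adj (pauliU C d.+1 f))).
rewrite sum_tuple_cons; under eq_bigr do rewrite sum_tuple_cons.
by rewrite !pair_bigA; apply: eq_bigr => -[[a b] t].
Qed.

Lemma twirl_Ukey d (P : 'M[C]_(2 ^ d)) : twirl (@Ukey C d) P = ((2 ^ d)%:R * \tr P)%:M.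
Proof. exact: depolarizing_pauliU. Qed.

Lemma mxtrace_ptrace2 m n (X : 'M[C]_(m * n)) : \tr (ptrace2 X) = \tr X.
Proof.
rewrite /ptrace2 mxtrace_castmx raddf_sum /=.
under eq_bigr do rewrite mxtrace_mulC mulmxA tensmx_mul mul1mx /ket trmx_delta mul_delta_mx.
by rewrite -raddf_sum /= -mulmx_suml -tensmx_sumr -mx1_sum_delta tensmx_scalar mulr1 mul1mx.
Qed.

Lemma mxtrace_ptrace1 m n (X : 'M[C]_(m * n)) : \tr (ptrace1 X) = \tr X.
Proof.
rewrite /ptrace1 mxtrace_castmx raddf_sum /=.
under eq_bigr do rewrite mxtrace_mulC mulmxA tensmx_mul mul1mx /ket trmx_delta mul_delta_mx.
by rewrite -raddf_sum /= -mulmx_suml -tensmx_suml -mx1_sum_delta tensmx_scalar mulr1 mul1mx.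
Qed.

Definition herm_block n (A B : 'M[C]_n) : 'M[C]_(2 * n) :=
  E2 C 0 0 *t A + E2 C 0 1 *t B + E2 C 1 0 *t adj B + E2 C 1 1 *t A.

Lemma herm_blockD n (A1 A2 B1 B2 : 'M[C]_n) :
  herm_block (A1 + A2) (B1 + B2) = herm_block A1 B1 + herm_block A2 B2.
Proof. by apply/matrixP => i j; rewrite !mxE rmorphD; ring. Qed.

Lemma sum_herm_block (I J : finType) n (F : I -> 'M[C]_n) (G : J -> 'M[C]_n) :
  \sum_i \sum_j herm_block (F i) (G j) =
  herm_block (\sum_i F i) 0 *+ #|J| + herm_block 0 (\sum_j G j) *+ #|I|.
Proof.
have herm_block0 : herm_block 0 0 = 0 :> 'M[C]_(2 * n).
  by apply/(addrI (herm_block 0 0)); rewrite -herm_blockD !addr0.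
have herm_block_split (A B : 'M[C]_n) : herm_block A B = herm_block A 0 + herm_block 0 B.
  by rewrite -herm_blockD addr0 add0r.
have morphA : {morph (@herm_block n)^~ 0 : A B / A + B}.
  by move=> A B; rewrite -herm_blockD addr0.
have morphB : {morph @herm_block n 0 : A B / A + B}.
  by move=> A B; rewrite -herm_blockD addr0.
under eq_bigr do under eq_bigr do rewrite herm_block_split.
under eq_bigr do rewrite big_split sumr_const.
rewrite big_split sumr_const /= sumrMnl.
by rewrite (big_morph _ morphA herm_block0) (big_morph _ morphB herm_block0).
Qed.

Lemma sum_keys_Ma d1 d2 (h : (d2 <= d1)%N) eta (X : 'M[C]_(2 ^ d1 * 2 ^ d2)) :
  \sum_(k : (2 * d1).-tuple bool) \sum_(k' : (2 * d2).-tuple bool) Ma h eta X k k' =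
  castmx (esym (expnS 2 d1), esym (expnS 2 d1))
    (herm_block (2^-1 *: twirl (@Ukey C d1) (ptrace2 X)) 0
       *+ #|{: (2 * d2).-tuple bool}|
     + herm_block 0 (eta%:R^-1 *: (Vmx C h *m twirl (@Ukey C d2) (ptrace1 X) *m adj (Vmx C h)))
       *+ #|{: (2 * d1).-tuple bool}|).
Proof.
rewrite /twirl mulmx_sumr mulmx_suml !scaler_sumr -sum_herm_block castmx_sum.
apply: eq_bigr => k _; rewrite castmx_sum; apply: eq_bigr => k' _.
by rewrite /Ma /= !mulmxA.
Qed.

Lemma Enc_eq_tr d1 d2 (h : (d2 <= d1)%N) eta (X Y : 'M[C]_(2 ^ d1 * 2 ^ d2)) :
  \tr X = \tr Y -> Enc h eta X = Enc h eta Y.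
Proof.
move=> trXY; rewrite /Enc; congr (_ *: _).
have twirl_perm (Z : 'M[C]_(2 ^ d1 * 2 ^ d2)) :
  \sum_(k : (2 * d1).-tuple bool) \sum_(k' : (2 * d2).-tuple bool) \sum_(s : 'S_(2 ^ d1.+1))
    perm_mx s *m Ma h eta Z k k' *m adj (perm_mx s) =
  twirl (@perm_mx C _) (\sum_k \sum_k' Ma h eta Z k k').
  by rewrite -twirl_sum; apply: eq_bigr => k _; rewrite -twirl_sum.
by rewrite !twirl_perm !sum_keys_Ma !twirl_Ukey !mxtrace_ptrace1 !mxtrace_ptrace2 trXY.
Qed.

End Encryption.

Theorem theorem16 (C : numClosedFieldType) (d1 d2 eta : nat)
  (h : (d2 <= d1)%N) (hd2 : (1 <= d2)%N) (heta : (0 < eta)%N)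
  (A : adversary C d1 d2) :
  valid_adversary A ->
  `|qcpa_prob h eta A true - qcpa_prob h eta A false| = 0.
Proof.
move=> [_ _ _ densities _].
have same_challenge (j : adv_J A) :
    Enc h eta (adv_Mo1 j *t adv_Mc1 j) = Enc h eta (adv_Mo0 j *t adv_Mc0 j).
  have [[_ tr_o0] [_ tr_c0] [_ tr_o1] [_ tr_c1]] := densities j.
  by apply: Enc_eq_tr; rewrite !mxtrace_tens tr_o1 tr_c1 tr_o0 tr_c0.
pose rho1 := run_rounds h eta (adv_pre A) (adv_init A).
have same_state : \sum_j kapply (adv_inst j) rho1 *t Enc h eta (adv_Mo1 j *t adv_Mc1 j)
                = \sum_j kapply (adv_inst j) rho1 *t Enc h eta (adv_Mo0 j *t adv_Mc0 j).
  by apply: eq_bigr => j _; rewrite same_challenge.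
suff -> : qcpa_prob h eta A true = qcpa_prob h eta A false by rewrite subrr normr0.
exact: (congr1 (fun rho2 =>
  \tr (adv_F A *m run_rounds h eta (adv_post A) (kapply (adv_chal A) rho2))) same_state).
Qed.
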